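(* Under the setting below, let $(x^*,z^*,s^* )$ with multiplier $\lambda^*$ for (C) (and nonnegative multipliers for the other constraints) be a KKT point of (P). Then for every $t$ with $(\beta_t,\theta_t)\in\Omega^{IV}_t(\lambda^* )$ we have $(x_t^*,z_t^* )=(x^{IV}_t(\lambda^* ),0)$, where $x^{IV}_t(\lambda)\in(0,1]$ satisfies $\theta_t u_t'(x^{IV}_t(\lambda))-\beta_t c_t e_t'(x^{IV}_t(\lambda)c_t)=d_t\lambda$, and $\Omega^{IV}_t(\lambda)=\Big\{(\beta,\theta):\beta>0,\ \theta<\frac{X_t(\lambda)}{u_t'(a_t(\beta,\lambda))},\ \theta\le\frac{\beta c_te_t'(c_t)+d_t\lambda}{u_t'(1)}\Big\}$.
   Context: Fix an integer $T\ge 1$, a data cap $Q>0$ and an overage fee $\pi>0$. For each $t\in\{1,\dots,T\}$ fix reals $d_t\ge 0$, $r_t\ge 0$, $c_t>0$, $p_t>0$, $\theta_t>0$, $\beta_t>0$ and functions $u_t,e_t:[0,\infty)\to\mathbb{R}$ such that: $u_t$ is continuous, increasing and strictly concave, differentiable on $(0,\infty)$, and $u_t':(0,\infty)\to(0,\infty)$ is a strictly decreasing bijection with inverse $u_t'^{-1}$; $e_t$ is increasing, strictly convex and continuously differentiable, and $e_t':[0,\infty)\to[0,\infty)$ is a strictly increasing bijection with inverse $e_t'^{-1}$. For $0\le z\le x\le 1$ let $\tilde f_t(x,z)=\theta_t u_t(x)-\beta_t e_t((x-z)c_t)-p_t c_t z$ and $\tilde h_t(x,z)=d_t x+r_t z$.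 Problem (P): maximize $\sum_{t=1}^T \tilde f_t(x_t,z_t)-\pi s$ over $x,z\in\mathbb{R}^T$, $s\in\mathbb{R}$, subject to $0\le z_t\le x_t\le 1$ for all $t$, $s\ge 0$, and (C): $s\ge \sum_{t=1}^T\tilde h_t(x_t,z_t)-Q$. A KKT point of (P) consists of a feasible $(x^*,z^*,s^* )$ and nonnegative Lagrange multipliers for all constraints satisfying stationarity of the Lagrangian and complementary slackness; $\lambda^*$ denotes the multiplier of (C) (the shadow price of wireless data). For $\lambda\ge 0$ and $\beta>0$ write $a_t(\beta,\lambda)=\frac{1}{c_t}\,e_t'^{-1}\!\Big(\frac{p_tc_t+r_t\lambda}{\beta c_t}\Big)$ and $X_t(\lambda)=p_tc_t+(d_t+r_t)\lambda$. *)

From Stdlib Require Import Reals.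
From Coquelicot Require Import Coquelicot.
Open Scope R_scope.

(* sum_upto n f = f 0 + ... + f (n-1); periods t = 1..T are indexed 0..T-1. *)
Fixpoint sum_upto (n : nat) (f : nat -> R) : R :=
  match n with
  | O => 0
  | S m => sum_upto m f + f m
  end.

Definition htil (d r : nat -> R) (t : nat) (x z : R) : R := d t * x + r t * z.

(* KKT point of problem (P), written with the Lagrangian
   L = sum_t f_t(x_t,z_t) - pi s + sum_t [mu1_t z_t + mu2_t (x_t - z_t) + mu3_t (1 - x_t)]
       + nu s + lam (s - sum_t h_t(x_t,z_t) + Q).
   du t = u_t', de t = e_t' (the derivatives; linked to u_t, e_t in the theorem).
   Since u_t is only differentiable on (0,oo), the gradient of L exists only when
   every x_t > 0; this is part of the requirement that stationarity holds. *)
Definition is_KKT (T : nat) (Q pi : R) (d r c p theta beta : nat -> R)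
  (du de : nat -> R -> R) (x z : nat -> R) (s lam : R) : Prop :=
  (forall t, (t < T)%nat -> 0 <= z t /\ z t <= x t /\ x t <= 1) /\
  0 <= s /\
  s >= sum_upto T (fun t => htil d r t (x t) (z t)) - Q /\
  0 <= lam /\
  exists (mu1 mu2 mu3 : nat -> R) (nu : R),
    0 <= nu /\
    (forall t, (t < T)%nat ->
       0 <= mu1 t /\ 0 <= mu2 t /\ 0 <= mu3 t /\
       0 < x t /\
       theta t * du t (x t) - beta t * c t * de t ((x t - z t) * c t)
         + mu2 t - mu3 t - lam * d t = 0 /\
       beta t * c t * de t ((x t - z t) * c t) - p t * c t
         + mu1 t - mu2 t - lam * r t = 0 /\
       mu1 t * z t = 0 /\ mu2 t * (x t - z t) = 0 /\ mu3 t * (1 - x t) = 0) /\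
    - pi + nu + lam = 0 /\
    nu * s = 0 /\
    lam * (s - sum_upto T (fun t => htil d r t (x t) (z t)) + Q) = 0.

Definition a_t (c p r : nat -> R) (deinv : nat -> R -> R) (t : nat) (b lam : R) : R :=
  / c t * deinv t ((p t * c t + r t * lam) / (b * c t)).

Definition X_t (c p d r : nat -> R) (t : nat) (lam : R) : R :=
  p t * c t + (d t + r t) * lam.

Definition OmegaIV (c p d r : nat -> R) (du de deinv : nat -> R -> R)
  (t : nat) (lam b th : R) : Prop :=
  b > 0 /\
  th < X_t c p d r t lam / du t (a_t c p r deinv t b lam) /\
  th <= (b * c t * de t (c t) + d t * lam) / du t 1.

(* The argument is local to one period.  From the period's KKT conditions:
   - if z_t > 0 then mu1_t = 0; mu2_t > 0 would force x_t = z_t, hence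
     e'(0) = 0 and the z-stationarity gives p c + r lambda = 0, impossible;
     so mu2_t = 0, and z-stationarity says e'((x-z)c) = (p c + r lambda)/(beta c),
     i.e. x_t - z_t = a_t(beta_t, lambda).  Since u' decreases,
     theta u'(x_t) < theta u'(a_t) < X_t(lambda) (first bound of Omega^IV),
     contradicting the x-stationarity theta u'(x_t) = X_t + mu3_t.
   - once z_t = 0, mu3_t > 0 would force x_t = 1 and then x-stationarity
     contradicts the second bound of Omega^IV; so mu3_t = 0, mu2_t = 0, and
     the x-stationarity is exactly the claimed equation. *)

From Stdlib Require Import Reals Lra.
From Coquelicot Require Import Coquelicot.
Open Scope R_scope.

Section IncreasingWithInverse.

Variables (f finv : R -> R).
Hypothesis f_nonneg : forall x, 0 <= x -> f x >= 0.
Hypothesis f_incr : forall x y, 0 <= x -> x < y -> f x < f y.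
Hypothesis finv_spec : forall y, 0 <= y -> 0 <= finv y /\ f (finv y) = y.

(* Since 0 is attained and f is nonnegative and increasing, f 0 = 0. *)
Lemma incr_at_zero : f 0 = 0.
Proof.
  destruct (finv_spec 0 (Rle_refl 0)) as [Hv0 Hv].
  destruct (Rle_lt_or_eq_dec 0 (finv 0) Hv0) as [Hlt | Heq].
  - pose proof (f_incr 0 (finv 0) (Rle_refl 0) Hlt).
    pose proof (f_nonneg 0 (Rle_refl 0)). lra.
  - rewrite Heq at 1. exact Hv.
Qed.

(* f is injective on [0,oo), so finv is its genuine inverse there. *)
Lemma incr_eq_inv : forall w y, 0 <= w -> 0 <= y -> f w = y -> w = finv y.
Proof.
  intros w y Hw Hy Hfw.
  destruct (finv_spec y Hy) as [Hv0 Hv].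
  destruct (Rtotal_order w (finv y)) as [Hl | [He | Hg]]; auto.
  - pose proof (f_incr _ _ Hw Hl). lra.
  - pose proof (f_incr _ _ Hv0 Hg). lra.
Qed.

(* Positive values have positive preimages, because f 0 = 0. *)
Lemma inv_pos : forall y, 0 < y -> 0 < finv y.
Proof.
  intros y Hy.
  destruct (finv_spec y (Rlt_le _ _ Hy)) as [Hv0 Hv].
  destruct (Rle_lt_or_eq_dec 0 _ Hv0) as [Hl | He]; auto.
  rewrite <- He, incr_at_zero in Hv. lra.
Qed.

End IncreasingWithInverse.

Section OnePeriod.

Variables (theta beta c p d r lam x z mu1 mu2 mu3 : R) (du de deinv : R -> R).

Hypothesis Hc : c > 0.
Hypothesis Hp : p > 0.
Hypothesis Hr : r >= 0.
Hypothesis Htheta : theta > 0.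
Hypothesis Hbeta : beta > 0.
Hypothesis Hlam : 0 <= lam.

Hypothesis Hdu_pos : forall y, 0 < y -> du y > 0.
Hypothesis Hdu_decr : forall y w, 0 < y -> y < w -> du w < du y.
Hypothesis Hde_nonneg : forall y, 0 <= y -> de y >= 0.
Hypothesis Hde_incr : forall y w, 0 <= y -> y < w -> de y < de w.
Hypothesis Hdeinv : forall y, 0 <= y -> 0 <= deinv y /\ de (deinv y) = y.

Hypothesis Hz0 : 0 <= z.
Hypothesis Hzx : z <= x.
Hypothesis Hx1 : x <= 1.
Hypothesis Hx0 : 0 < x.
Hypothesis Hmu1 : 0 <= mu1.
Hypothesis Hmu2 : 0 <= mu2.
Hypothesis Hmu3 : 0 <= mu3.
Hypothesis Stat_x : theta * du x - beta * c * de ((x - z) * c)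
                    + mu2 - mu3 - lam * d = 0.
Hypothesis Stat_z : beta * c * de ((x - z) * c) - p * c
                    + mu1 - mu2 - lam * r = 0.
Hypothesis Slack1 : mu1 * z = 0.
Hypothesis Slack2 : mu2 * (x - z) = 0.
Hypothesis Slack3 : mu3 * (1 - x) = 0.

(* The two defining bounds of Omega^IV, with a = a_t(beta, lam) and
   X_t(lam) unfolded. *)
Let a := / c * deinv ((p * c + r * lam) / (beta * c)).
Hypothesis Omega_a : theta < (p * c + (d + r) * lam) / du a.
Hypothesis Omega_1 : theta <= (beta * c * de c + d * lam) / du 1.

Lemma price_pos : 0 < p * c + r * lam.
Proof. pose proof (Rmult_lt_0_compat p c). pose proof (Rmult_le_pos r lam). lra. Qed.

Lemma slack_zero : forall m g, m * g = 0 -> 0 < g -> m = 0.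
Proof. intros m g Hmg Hg. destruct (Rmult_integral _ _ Hmg); lra. Qed.

Lemma slack_active : forall m g, m * g = 0 -> 0 < m -> g = 0.
Proof. intros m g Hmg Hm. destruct (Rmult_integral _ _ Hmg); lra. Qed.

(* If z > 0 the constraint z <= x cannot be active: x = z would give
   e'(0) = 0 and z-stationarity would read p c + r lam = 0. *)
Lemma z_pos_mu2_zero : 0 < z -> mu2 = 0.
Proof.
  intros Hz.
  assert (Hm1 : mu1 = 0) by (apply (slack_zero _ _ Slack1 Hz)).
  destruct (Rle_lt_or_eq_dec 0 mu2 Hmu2) as [Hm2 | Hm2]; [exfalso | lra].
  assert (Hxz : x - z = 0) by (apply (slack_active _ _ Slack2 Hm2)).
  pose proof price_pos. pose proof Stat_z as Sz.
  rewrite Hxz, Rmult_0_l, (incr_at_zero de deinv) in Sz; auto. lra.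
Qed.

Lemma gap_eq_a : mu1 = 0 -> mu2 = 0 -> x - z = a.
Proof.
  intros Hm1 Hm2.
  assert (Hbc : 0 < beta * c) by (apply Rmult_lt_0_compat; lra).
  assert (Hde : de ((x - z) * c) = (p * c + r * lam) / (beta * c)).
  { apply (Rmult_eq_reg_l (beta * c)); [|lra].
    field_simplify; lra. }
  apply (incr_eq_inv de deinv) in Hde; auto.
  - unfold a. rewrite <- Hde. field. lra.
  - apply Rmult_le_pos; lra.
  - apply Rlt_le, Rdiv_lt_0_compat; [apply price_pos | lra].
Qed.

Lemma a_pos : 0 < a.
Proof.
  unfold a. apply Rmult_lt_0_compat; [apply Rinv_0_lt_compat; lra|].
  apply (inv_pos de); auto.
  apply Rdiv_lt_0_compat; [apply price_pos | apply Rmult_lt_0_compat; lra].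
Qed.

Lemma z_zero : z = 0.
Proof.
  destruct (Rle_lt_or_eq_dec 0 z Hz0) as [Hz | Hz]; [exfalso | lra].
  assert (Hm1 : mu1 = 0) by (apply (slack_zero _ _ Slack1 Hz)).
  assert (Hm2 : mu2 = 0) by (apply z_pos_mu2_zero, Hz).
  assert (Hgap := gap_eq_a Hm1 Hm2).
  pose proof a_pos as Ha.
  (* first bound of Omega^IV: theta u'(a) < X_t(lam) *)
  assert (Hth : theta * du a < p * c + (d + r) * lam).
  { apply Rlt_div_r; [apply Hdu_pos, Ha | exact Omega_a]. }
  (* u' decreasing and a < x *)
  assert (Hdec : theta * du x < theta * du a).
  { apply Rmult_lt_compat_l; [lra | apply Hdu_decr; lra]. }
  (* adding z-stationarity, x-stationarity reads theta u'(x) = X_t(lam) + mu3 *)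
  assert (HX : theta * du x = p * c + (d + r) * lam + mu3) by lra.
  lra.
Qed.

Lemma mu2_zero : mu2 = 0.
Proof.
  pose proof Slack2 as S2. rewrite z_zero, Rminus_0_r in S2.
  apply (slack_zero _ _ S2 Hx0).
Qed.

(* The cap x <= 1 is not active: otherwise x-stationarity at x = 1 violates
   the second bound of Omega^IV. *)
Lemma cap_mu3_zero : mu3 = 0.
Proof.
  destruct (Rle_lt_or_eq_dec 0 mu3 Hmu3) as [Hm3 | Hm3]; [exfalso | lra].
  assert (Hx : 1 - x = 0) by (apply (slack_active _ _ Slack3 Hm3)).
  pose proof mu2_zero as Hm2. pose proof Stat_x as Sx.
  replace x with 1 in Sx by lra.
  rewrite z_zero, Rminus_0_r, Rmult_1_l in Sx.
  assert (Hb : theta * du 1 <= beta * c * de c + d * lam).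
  { apply Rle_div_r; [apply Hdu_pos; lra | exact Omega_1]. }
  lra.
Qed.

Theorem period_regime_IV :
  z = 0 /\ 0 < x /\ x <= 1 /\ theta * du x - beta * c * de (x * c) = d * lam.
Proof.
  pose proof z_zero as Hz.
  pose proof cap_mu3_zero as Hm3.
  pose proof mu2_zero as Hm2.
  pose proof Stat_x as Sx. rewrite Hz, Rminus_0_r in Sx.
  repeat split; lra.
Qed.

End OnePeriod.

Theorem lemma4
  (T : nat) (HT : (1 <= T)%nat) (Q pi : R) (HQ : Q > 0) (Hpi : pi > 0)
  (d r c p theta beta : nat -> R)
  (u e du de deinv : nat -> R -> R)
  (Hd : forall t, (t < T)%nat -> d t >= 0)
  (Hr : forall t, (t < T)%nat -> r t >= 0)
  (Hc : forall t, (t < T)%nat -> c t > 0)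
  (Hp : forall t, (t < T)%nat -> p t > 0)
  (Htheta : forall t, (t < T)%nat -> theta t > 0)
  (Hbeta : forall t, (t < T)%nat -> beta t > 0)
  (* u_t : continuous on [0,oo), increasing, strictly concave *)
  (Hu_cont0 : forall t, (t < T)%nat -> filterlim (u t) (at_right 0) (locally (u t 0)))
  (Hu_incr : forall t, (t < T)%nat -> forall x y, 0 <= x -> x < y -> u t x < u t y)
  (Hu_sconc : forall t, (t < T)%nat -> forall x y l, 0 <= x -> 0 <= y -> x <> y ->
      0 < l < 1 -> u t (l * x + (1 - l) * y) > l * u t x + (1 - l) * u t y)
  (* u_t differentiable on (0,oo) with derivative du t *)
  (Hu_der : forall t, (t < T)%nat -> forall x, 0 < x -> is_derive (u t) x (du t x))
  (* u_t' : (0,oo) -> (0,oo) strictly decreasing bijection *)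
  (Hdu_pos : forall t, (t < T)%nat -> forall x, 0 < x -> du t x > 0)
  (Hdu_decr : forall t, (t < T)%nat -> forall x y, 0 < x -> x < y -> du t y < du t x)
  (Hdu_surj : forall t, (t < T)%nat -> forall y, 0 < y -> exists x, 0 < x /\ du t x = y)
  (* e_t : increasing, strictly convex, continuously differentiable on [0,oo) *)
  (He_incr : forall t, (t < T)%nat -> forall x y, 0 <= x -> x < y -> e t x < e t y)
  (He_sconv : forall t, (t < T)%nat -> forall x y l, 0 <= x -> 0 <= y -> x <> y ->
      0 < l < 1 -> e t (l * x + (1 - l) * y) < l * e t x + (1 - l) * e t y)
  (He_der : forall t, (t < T)%nat -> forall x, 0 < x -> is_derive (e t) x (de t x))
  (He_der0 : forall t, (t < T)%nat ->
      filterlim (fun h => (e t h - e t 0) / h) (at_right 0) (locally (de t 0)))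
  (Hde_cont : forall t, (t < T)%nat -> forall x, 0 <= x ->
      filterlim (de t) (within (fun y => 0 <= y) (locally x)) (locally (de t x)))
  (* e_t' : [0,oo) -> [0,oo) strictly increasing bijection, with inverse deinv t *)
  (Hde_nonneg : forall t, (t < T)%nat -> forall x, 0 <= x -> de t x >= 0)
  (Hde_incr : forall t, (t < T)%nat -> forall x y, 0 <= x -> x < y -> de t x < de t y)
  (Hdeinv : forall t, (t < T)%nat -> forall y, 0 <= y ->
      0 <= deinv t y /\ de t (deinv t y) = y)
  (* a KKT point of (P) with multiplier lam for (C) *)
  (x z : nat -> R) (s lam : R)
  (HKKT : is_KKT T Q pi d r c p theta beta du de x z s lam) :
  forall t, (t < T)%nat ->
    OmegaIV c p d r du de deinv t lam (beta t) (theta t) ->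
    z t = 0 /\ 0 < x t /\ x t <= 1 /\
    theta t * du t (x t) - beta t * c t * de t (x t * c t) = d t * lam.
Proof.
  intros t Ht [_ [Omega_a Omega_1]].
  destruct HKKT as [Hfeas [_ [_ [Hlam [mu1 [mu2 [mu3 [nu [_ [Hstat _]]]]]]]]]].
  destruct (Hfeas t Ht) as [Hz0 [Hzx Hx1]].
  destruct (Hstat t Ht) as [Hm1 [Hm2 [Hm3 [Hx0 [Sx [Sz [C1 [C2 C3]]]]]]]].
  unfold X_t, a_t in Omega_a.
  exact (period_regime_IV (theta t) (beta t) (c t) (p t) (d t) (r t) lam
           (x t) (z t) (mu1 t) (mu2 t) (mu3 t) (du t) (de t) (deinv t)
           (Hc t Ht) (Hp t Ht) (Hr t Ht) (Htheta t Ht) (Hbeta t Ht)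
           Hlam (Hdu_pos t Ht) (Hdu_decr t Ht) (Hde_nonneg t Ht) (Hde_incr t Ht)
           (Hdeinv t Ht) Hz0 Hzx Hx1 Hx0 Hm1 Hm2 Hm3 Sx Sz C1 C2 C3
           Omega_a Omega_1).
Qed.
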